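(* Let $M$ be a finitely generated monoid. Then the number of ends of $M$ with respect to a finite generating set does not depend on the choice of finite generating set.
   Context: For a monoid $M$ generated by a finite set $X$, the right Cayley graph is the directed graph with vertex set $M$ and an edge labelled $a$ from $m$ to $ma$ for each $m\in M$, $a\in X$. The number of ends of $M$ with respect to $X$ is the supremum, over all finite sets $F$ of vertices, of the number of infinite connected components of the graph obtained by deleting $F$ from the underlying undirected graph of the right Cayley graph. *)

(* A monoid is given by a carrier M, an operation op and a unit e
   (axioms are hypotheses of the theorem). Finite sets are lists. *)
From Stdlib Require Import List Relations ClassicalEpsilon.
Import ListNotations.

Section Ends.
Variables (M : Type) (op : M -> M -> M) (e : M).

Definition generates (X : list M) : Prop :=
  forall m : M, exists l : list M,
    (forall a, In a l -> In a X) /\ m = fold_right op e l.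

(* Underlying undirected graph of the right Cayley graph: x -- y iff y = x a
   or x = y a for some a in X. *)
Definition cayley_adj (X : list M) (x y : M) : Prop :=
  exists a, In a X /\ (y = op x a \/ x = op y a).

Definition adj_minus (X F : list M) (x y : M) : Prop :=
  ~ In x F /\ ~ In y F /\ cayley_adj X x y.

(* Connectedness in the graph with F deleted (for vertices outside F). *)
Definition conn_minus (X F : list M) : relation M :=
  clos_refl_trans M (adj_minus X F).

Definition infinite_set (P : M -> Prop) : Prop :=
  ~ exists l : list M, forall x, P x -> In x l.

Definition infinite_component (X F : list M) (v : M) : Prop :=
  ~ In v F /\ infinite_set (fun w => conn_minus X F v w).

Definition at_least_inf_comps (X F : list M) (n : nat) : Prop :=
  exists vs : list M, length vs = n /\
    (forall v, In v vs -> infinite_component X F v) /\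
    NoDup vs /\
    (forall v w, In v vs -> In w vs -> v <> w -> ~ conn_minus X F v w).

(* k is the supremum over finite F of the number of infinite components
   (None = infinity). *)
Definition is_num_ends (X : list M) (k : option nat) : Prop :=
  match k with
  | Some m => (forall F n, at_least_inf_comps X F n -> n <= m) /\
              exists F, at_least_inf_comps X F m
  | None => forall n, exists F, at_least_inf_comps X F n
  end.

Definition num_ends (X : list M) : option nat :=
  epsilon (inhabits None) (fun k => is_num_ends X k).

End Ends.

From Stdlib Require Import List Relations Classical ClassicalEpsilon
  FunctionalExtensionality PropExtensionality.
Import ListNotations.

(* Write every generator of X as a word over Y and let R be the finite set of
   values of the suffixes of these words.  A Cayley X-edge u -- u x outside
   F R then unfolds to a Y-path from u to u x avoiding F.  So X-connectivity
   off F R implies Y-connectivity off F, and symmetrically with a second finite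
   set G = (F R) R'.  Each infinite component of the Y-graph off F contains a
   vertex whose Y-component off G is still infinite; these vertices lie in
   infinite, pairwise distinct components of the X-graph off F R.  Hence the
   counts of infinite components attainable for X and Y coincide, and so do
   their suprema. *)

Definition mulset {M : Type} (op : M -> M -> M) (F R : list M) : list M :=
  flat_map (fun f => map (op f) R) F.

Lemma in_mulset {M : Type} (op : M -> M -> M) F R f r :
  In f F -> In r R -> In (op f r) (mulset op F R).
Proof. intros Hf Hr. apply in_flat_map. exists f. split; [exact Hf | apply in_map, Hr]. Qed.

Lemma finite_list_union {A B : Type} (P : A -> B -> Prop) (S : list A) :
  (forall s, In s S -> exists l, forall w, P s w -> In w l) ->
  exists l, forall s w, In s S -> P s w -> In w l.
Proof.
  induction S as [|s S IH]; intros H.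
  - exists []. intros s w [].
  - destruct IH as [l' Hl']; [intros; apply H; simpl; auto|].
    destruct (H s (or_introl eq_refl)) as [l Hl].
    exists (l ++ l'). intros s0 w [<-|Hs] Hw; apply in_or_app; eauto.
Qed.

Fixpoint suffixes {A : Type} (l : list A) : list (list A) :=
  l :: match l with [] => [] | _ :: t => suffixes t end.

Lemma in_suffixes_app {A : Type} (l1 l2 : list A) : In l2 (suffixes (l1 ++ l2)).
Proof. induction l1 as [|a l1 IH]; simpl; [destruct l2; simpl|]; auto. Qed.

Section ChangeOfGenerators.

Variables (M : Type) (op : M -> M -> M) (e : M).
Hypothesis assoc : forall x y z, op x (op y z) = op (op x y) z.
Hypothesis idl : forall x, op e x = x.
Hypothesis idr : forall x, op x e = x.

Local Notation word := (fold_right op e).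
Local Notation conn := (conn_minus M op).

Lemma mulset_extensive F R : In e R -> incl F (mulset op F R).
Proof. intros He f Hf. rewrite <- (idr f). apply in_mulset; assumption. Qed.

Lemma word_app_single l y : word (l ++ [y]) = op (word l) y.
Proof. induction l as [|a l IH]; simpl; [rewrite idl, idr | rewrite IH, assoc]; reflexivity. Qed.

Lemma conn_minus_sym X F x y : conn X F x y -> conn X F y x.
Proof.
  induction 1 as [x y [Hx [Hy [a [Ha E]]]]| |]; [|apply rt_refl|eapply rt_trans; eauto].
  apply rt_step. repeat split; auto. exists a. split; [exact Ha|tauto].
Qed.

Lemma conn_minus_subset X F G x y : incl F G -> conn X G x y -> conn X F x y.
Proof.
  intros HFG. induction 1 as [x y [Hx [Hy Hadj]]| |]; [|apply rt_refl|eapply rt_trans; eauto].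
  apply rt_step. repeat split; auto.
Qed.

Definition spelled_with_suffixes_in (Y R : list M) (x : M) : Prop :=
  exists l, incl l Y /\ x = word l /\
    forall l1 l2, l = l1 ++ l2 -> In (word l2) R.

Lemma suffix_closed_spelling X Y :
  (forall x, In x X -> exists l, incl l Y /\ x = word l) ->
  exists R, In e R /\ forall x, In x X -> spelled_with_suffixes_in Y R x.
Proof.
  induction X as [|x X IH]; intros H.
  - exists [e]. split; [left; reflexivity | intros x []].
  - destruct IH as [R [He HR]]; [intros; apply H; simpl; auto|].
    destruct (H x (or_introl eq_refl)) as [l [Hl Ex]].
    exists (map word (suffixes l) ++ R). split; [apply in_or_app; auto|].
    intros z [<-|Hz].
    + exists l. repeat split; auto. intros l1 l2 ->.
      apply in_or_app. left. apply in_map, in_suffixes_app.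
    + destruct (HR z Hz) as [l' [H1 [H2 H3]]]. exists l'. repeat split; auto.
      intros l1 l2 E. apply in_or_app. right. eauto.
Qed.

(* If the vertex u (a1 ... ai) reached along the path lay in F, then the
   endpoint u (a1 ... ai) (a(i+1) ... ak) would lie in F R. *)
Lemma conn_minus_along_word Y F R l u :
  incl l Y -> (forall l1 l2, l = l1 ++ l2 -> In (word l2) R) ->
  ~ In u F -> ~ In (op u (word l)) (mulset op F R) ->
  conn Y F u (op u (word l)).
Proof.
  revert u. induction l as [|a l IH]; intros u HY HR Hu Hv; simpl in *.
  - rewrite idr. apply rt_refl.
  - rewrite assoc in *.
    assert (Hua : ~ In (op u a) F).
    { intros Hin. apply Hv, in_mulset; [exact Hin | apply (HR [a] l); reflexivity]. }
    apply rt_trans with (op u a).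
    + apply rt_step. repeat split; auto. exists a. split; [apply HY; left|left]; reflexivity.
    + apply IH; auto.
      * intros b Hb. apply HY. right. exact Hb.
      * intros l1 l2 E. apply (HR (a :: l1) l2). simpl; congruence.
Qed.

Lemma conn_minus_change_generators X Y F R :
  In e R -> (forall x, In x X -> spelled_with_suffixes_in Y R x) ->
  forall u v, conn X (mulset op F R) u v -> conn Y F u v.
Proof.
  intros He HX. induction 1 as [u v [Hu [Hv [a [Ha E]]]]| |]; [|apply rt_refl|eapply rt_trans; eauto].
  assert (Hu' : ~ In u F) by (intro; apply Hu, (mulset_extensive _ _ He); assumption).
  assert (Hv' : ~ In v F) by (intro; apply Hv, (mulset_extensive _ _ He); assumption).
  destruct (HX a Ha) as [l [Hl [-> HR]]].
  destruct E as [->| ->].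
  - apply (conn_minus_along_word Y F R); auto.
  - apply conn_minus_sym, (conn_minus_along_word Y F R); auto.
Qed.

(* Along the path e, y1, y1 y2, ..., w spelling w, the part after the last
   vertex in G avoids G and starts in G Y (or at e if the path never meets G). *)
Lemma conn_minus_from_frontier Y G w :
  generates M op e Y -> ~ In w G ->
  exists s, In s (e :: mulset op G Y) /\ ~ In s G /\ conn Y G s w.
Proof.
  intros HY Hw. destruct (HY w) as [l [Hl ->]]. revert Hl Hw.
  induction l as [|y l IH] using rev_ind; intros Hl Hw.
  - exists e. repeat split; [left; reflexivity | exact Hw | apply rt_refl].
  - rewrite word_app_single in *.
    assert (Hy : In y Y) by (apply Hl, in_or_app; right; left; reflexivity).
    destruct (classic (In (word l) G)) as [Hin|Hnin].
    + exists (op (word l) y). repeat split; [right; apply in_mulset; auto | exact Hw | apply rt_refl].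
    + destruct IH as [s [HS [Hs Hsw]]]; [intros a Ha; apply Hl, in_or_app; left; exact Ha | exact Hnin|].
      exists s. repeat split; auto. apply rt_trans with (word l); [exact Hsw|].
      apply rt_step. repeat split; auto. exists y. auto.
Qed.

(* Removing the finite set G cuts the infinite component of v into finitely
   many pieces, one for each frontier vertex, so one piece stays infinite. *)
Lemma infinite_component_shrink Y F G v :
  generates M op e Y -> incl F G -> infinite_component M op Y F v ->
  exists s, ~ In s G /\ conn Y F v s /\ infinite_set M (conn Y G s).
Proof.
  intros HY HFG [Hv Hinf]. apply NNPP. intros Hno.
  destruct (finite_list_union (fun s w => conn Y F v s /\ ~ In s G /\ conn Y G s w)
              (e :: mulset op G Y)) as [l Hl].
  { intros s _. destruct (classic (conn Y F v s /\ ~ In s G)) as [[Hvs Hs]|Hn].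
    - apply NNPP. intros Hfin. apply Hno. exists s. repeat split; auto.
      intros [l Hl]. apply Hfin. exists l. intros w [_ [_ Hw]]. auto.
    - exists []. intros w [Hvs [Hs _]]. tauto. }
  apply Hinf. exists (G ++ l). intros w Hvw. apply in_or_app.
  destruct (classic (In w G)) as [HwG|HwG]; [left; exact HwG | right].
  destruct (conn_minus_from_frontier Y G w HY HwG) as [s [HS [Hs Hsw]]].
  apply (Hl s w HS). repeat split; auto. apply rt_trans with w; [exact Hvw|].
  apply conn_minus_sym, (conn_minus_subset Y F G); assumption.
Qed.

Lemma at_least_inf_comps_change_generators X Y F n :
  generates M op e X -> generates M op e Y -> at_least_inf_comps M op Y F n ->
  exists F', at_least_inf_comps M op X F' n.
Proof.
  intros GX GY [vs [Hlen [Hinf [Hnd Hsep]]]].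
  destruct (suffix_closed_spelling X Y) as [R1 [He1 HX]]; [intros x _; apply GY|].
  destruct (suffix_closed_spelling Y X) as [R2 [He2 HY]]; [intros y _; apply GX|].
  set (F' := mulset op F R1). set (G := mulset op F' R2).
  assert (HXY : forall u v, conn X F' u v -> conn Y F u v)
    by exact (conn_minus_change_generators X Y F R1 He1 HX).
  assert (HYX : forall u v, conn Y G u v -> conn X F' u v)
    by exact (conn_minus_change_generators Y X F' R2 He2 HY).
  assert (HFG : incl F G) by exact (incl_tran (mulset_extensive _ _ He1) (mulset_extensive _ _ He2)).
  set (Q := fun v s => ~ In s G /\ conn Y F v s /\ infinite_set M (conn Y G s)).
  set (f := fun v => epsilon (inhabits e) (Q v)).
  assert (Hf : forall v, In v vs -> Q v (f v)).
  { intros v Hv. apply epsilon_spec, (infinite_component_shrink Y F G v GY HFG), Hinf, Hv. }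
  assert (Hf_sep : forall v w, In v vs -> In w vs -> conn Y F (f v) (f w) -> v = w).
  { intros v w Hv Hw Hc. apply NNPP. intros Hne. apply (Hsep v w Hv Hw Hne).
    apply rt_trans with (f v); [apply (Hf v Hv)|].
    apply rt_trans with (f w); [exact Hc | apply conn_minus_sym, (Hf w Hw)]. }
  exists F', (map f vs). split; [|split; [|split]].
  - rewrite length_map. exact Hlen.
  - intros s Hs. apply in_map_iff in Hs as [v [<- Hv]].
    destruct (Hf v Hv) as [Hs [_ Hs_inf]]. split.
    + intros HsF. apply Hs, (mulset_extensive _ _ He2), HsF.
    + intros [l Hl]. apply Hs_inf. exists l. intros w Hw. apply Hl, HYX, Hw.
  - apply NoDup_map_NoDup_ForallPairs; [|exact Hnd].
    intros v w Hv Hw E. apply Hf_sep; [exact Hv | exact Hw | rewrite E; apply rt_refl].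
  - intros s t Hs Ht Hst Hc.
    apply in_map_iff in Hs as [v [<- Hv]]. apply in_map_iff in Ht as [w [<- Hw]].
    apply Hst. f_equal. apply Hf_sep, HXY, Hc; assumption.
Qed.

End ChangeOfGenerators.

Lemma is_num_ends_transfer {M : Type} (op : M -> M -> M) (X Y : list M) (k : option nat) :
  (forall n, (exists F, at_least_inf_comps M op X F n) <->
             (exists F, at_least_inf_comps M op Y F n)) ->
  is_num_ends M op X k -> is_num_ends M op Y k.
Proof.
  intros HXY. destruct k as [m|]; simpl.
  - intros [Hub Hm]. split.
    + intros F n Hn. destruct (proj2 (HXY n) (ex_intro _ F Hn)) as [F' HF'].
      exact (Hub F' n HF').
    + apply HXY, Hm.
  - intros H n. apply HXY, H.
Qed.

Theorem corollary7p3 (M : Type) (op : M -> M -> M) (e : M)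
  (assoc : forall x y z, op x (op y z) = op (op x y) z)
  (idl : forall x, op e x = x) (idr : forall x, op x e = x)
  (X Y : list M) :
  generates M op e X -> generates M op e Y ->
  num_ends M op X = num_ends M op Y.
Proof.
  intros GX GY.
  assert (HXY : forall n, (exists F, at_least_inf_comps M op X F n) <->
                          (exists F, at_least_inf_comps M op Y F n)).
  { intros n. split; intros [F HF].
    - exact (at_least_inf_comps_change_generators M op e assoc idl idr Y X F n GY GX HF).
    - exact (at_least_inf_comps_change_generators M op e assoc idl idr X Y F n GX GY HF). }
  unfold num_ends. f_equal.
  apply functional_extensionality. intros k. apply propositional_extensionality.
  split; apply is_num_ends_transfer; [exact HXY|]. intros n. symmetry. apply HXY.
Qed.
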